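(* Let $Y$ be a compact metric space with more than one point and let $g\colon Y\to Y$ be a topologically mixing TA-map. Then there exist $\varepsilon>0$, $k\in\mathbb N$ and a dense Mycielski set $T\subset Y$ with $g^k(T)\subset T$ which is syndetically $\varepsilon$-scrambled for $g$.
   Context: A continuous surjection $g\colon Y\to Y$ is c-expansive with constant $\beta>0$ if for any two full orbits $(x_i)_{i\in\mathbb Z},(y_i)_{i\in\mathbb Z}$ ($g(x_i)=x_{i+1}$, $g(y_i)=y_{i+1}$) with $x_0\ne y_0$ there is $n\in\mathbb Z$ with $d(x_n,y_n)>\beta$. $g$ has the shadowing property if for every $\varepsilon>0$ there is $\delta>0$ such that every sequence $(x_i)_{i\ge0}$ with $d(g(x_i),x_{i+1})<\delta$ for all $i$ is $\varepsilon$-traced by some $z$, i.e. $d(g^i(z),x_i)<\varepsilon$ for all $i\ge0$. A TA-map is a c-expansive continuous surjection with shadowing. Mixing: $\{n: g^n(U)\cap V\neq\emptyset\}$ cofinite for all nonempty open $U,V$. Syndetic: subset of $\mathbb N$ meeting every set with arbitrarily long runs of consecutive integers. Syndetically $\varepsilon$-scrambled set: at least two points, every pair of distinct points $x,y$ satisfies $\{n:d(g^nx,g^ny)<\eta\}$ syndetic for all $\eta>0$, $d(g^nx,g^ny)\not\to0$, and $\limsup_n d(g^nx,g^ny)\ge\varepsilon$. Mycielski set: countable union of Cantor sets. *)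

From Stdlib Require Import Reals ZArith List.
Open Scope R_scope.

Section Dyn.
Context {Y : Type} (d : Y -> Y -> R).

Definition is_metric : Prop :=
  (forall x y, 0 <= d x y) /\
  (forall x y, d x y = 0 <-> x = y) /\
  (forall x y, d x y = d y x) /\
  (forall x y z, d x z <= d x y + d y z).

Definition is_open (U : Y -> Prop) : Prop :=
  forall x, U x -> exists r, r > 0 /\ forall y, d x y < r -> U y.

Definition is_compact_space : Prop :=
  forall (I : Type) (U : I -> Y -> Prop),
    (forall i, is_open (U i)) -> (forall y, exists i, U i y) ->
    exists l : list I, forall y, exists i, In i l /\ U i y.

Definition continuous_map (g : Y -> Y) : Prop :=
  forall x eps, eps > 0 -> exists delta, delta > 0 /\
    forall y, d x y < delta -> d (g x) (g y) < eps.

Definition surjective_map (g : Y -> Y) : Prop := forall y, exists x, g x = y.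

Definition full_orbit (g : Y -> Y) (x : Z -> Y) : Prop :=
  forall i : Z, g (x i) = x (i + 1)%Z.

Definition c_expansive (g : Y -> Y) (beta : R) : Prop :=
  beta > 0 /\
  forall x y : Z -> Y, full_orbit g x -> full_orbit g y -> x 0%Z <> y 0%Z ->
    exists n : Z, d (x n) (y n) > beta.

Definition has_shadowing (g : Y -> Y) : Prop :=
  forall eps, eps > 0 -> exists delta, delta > 0 /\
    forall x : nat -> Y, (forall i, d (g (x i)) (x (S i)) < delta) ->
      exists z, forall i, d (Nat.iter i g z) (x i) < eps.

Definition TA_map (g : Y -> Y) : Prop :=
  continuous_map g /\ surjective_map g /\
  (exists beta, c_expansive g beta) /\ has_shadowing g.

Definition mixing (g : Y -> Y) : Prop :=
  forall U V : Y -> Prop, is_open U -> is_open V ->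
    (exists u, U u) -> (exists v, V v) ->
    exists N : nat, forall n, (n >= N)%nat -> exists u, U u /\ V (Nat.iter n g u).

Definition syndetic (S : nat -> Prop) : Prop :=
  forall A : nat -> Prop,
    (forall L : nat, exists m : nat, forall i, (i < L)%nat -> A (m + i)%nat) ->
    exists n, S n /\ A n.

Definition syndetically_scrambled (g : Y -> Y) (eps : R) (T : Y -> Prop) : Prop :=
  (exists a b, T a /\ T b /\ a <> b) /\
  forall x y, T x -> T y -> x <> y ->
    (forall eta, eta > 0 ->
       syndetic (fun n => d (Nat.iter n g x) (Nat.iter n g y) < eta)) /\
    ~ Un_cv (fun n => d (Nat.iter n g x) (Nat.iter n g y)) 0 /\
    (* limsup_n d(g^n x, g^n y) >= eps *)
    (forall delta, delta > 0 -> forall N : nat, exists n, (n >= N)%nat /\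
       d (Nat.iter n g x) (Nat.iter n g y) > eps - delta).

(* Cantor space 2^N with the product topology *)
Definition agree_upto (n : nat) (w w' : nat -> bool) : Prop :=
  forall i, (i < n)%nat -> w i = w' i.

Definition cantor_set (C : Y -> Prop) : Prop :=
  exists h : (nat -> bool) -> Y,
    (forall w, C (h w)) /\
    (forall y, C y -> exists w, h w = y) /\
    (forall w w', h w = h w' -> w = w') /\
    (forall w eps, eps > 0 -> exists n, forall w', agree_upto n w w' ->
        d (h w) (h w') < eps) /\
    (forall w n, exists delta, delta > 0 /\ forall w', d (h w) (h w') < delta ->
        agree_upto n w w').

Definition mycielski (T : Y -> Prop) : Prop :=
  exists C : nat -> (Y -> Prop), (forall k, cantor_set (C k)) /\
    forall y, T y <-> exists k, C k y.

Definition dense (T : Y -> Prop) : Prop :=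
  forall x r, r > 0 -> exists y, d x y < r /\ T y.

End Dyn.

From Stdlib Require Import Reals ZArith List Lia Lra Cantor Arith.
From Stdlib Require Import ClassicalEpsilon Classical FunctionalExtensionality Bool.

(* Fix distinct points u, q1 of Y, a scale e (at most beta/4 and below
   d(u,q1)/6) and a shadowing constant delta for e.  With it, forward shadowing of a bi-infinite delta-pseudo-orbit
     converges to a canonical shadowing point, which depends continuously on
     the pseudo-orbit.
   - Coding: a sequence of blocks B : Z -> Y, linked by delta-jumps after L
     steps, unfolds into a pseudo-orbit.  For an index c and a word w in 2^N
     the blocks first follow a long orbit segment through the c-th point of a
     countable dense family, then copies of rho, except at sparse slots
     (positions 16(j+1)^2) carrying the pattern gam kap (gam|rho) (kap|rho)
     that encodes bit j of (c, w).
   - T is the set of images g^(8La) of the shadowing points.  Different codes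
     differ at infinitely many slots, where one point is near kap and the other
     near rho (so limsup >= d(u,q1)/2), while between the ever sparser slots
     both points follow rho (syndetic proximality).  For fixed (c, a) the map
     w |-> point is a homeomorphism onto its image, so T is a countable union
     of Cantor sets; it is dense by the choice of centers and invariant under
     g^(8L). *)

Open Scope R_scope.

Lemma inv_succ_small r : r > 0 -> exists n : nat, / INR (S n) < r.
Proof.
  intros hr. destruct (archimed (/ r)) as [ha _].
  assert (hpos : (0 < up (/ r))%Z). { apply lt_IZR. pose proof (Rinv_0_lt_compat r hr). lra. }
  exists (Z.to_nat (up (/ r))).
  assert (H : / r < INR (S (Z.to_nat (up (/ r))))).
  { rewrite S_INR. rewrite INR_IZR_INZ. rewrite Z2Nat.id by lia. lra. }
  replace r with (/ / r) at 2 by (apply Rinv_inv).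
  apply Rinv_lt_contravar; [|exact H]. apply Rmult_lt_0_compat; [apply Rinv_0_lt_compat; exact hr|].
  apply lt_0_INR; lia.
Qed.

Fixpoint lmax (l : list nat) : nat := match l with nil => O | a :: l' => Nat.max a (lmax l') end.
Lemma lmax_in l a : In a l -> (a <= lmax l)%nat.
Proof. induction l; simpl; intros H; [contradiction|]. destruct H; subst; [lia|]. specialize (IHl H). lia. Qed.

Section Metric.
Context {Y : Type} (d : Y -> Y -> R) (hmet : is_metric d).

Lemma d_nonneg x y : 0 <= d x y. Proof. apply (proj1 hmet). Qed.
Lemma d_refl x : d x x = 0. Proof. apply (proj1 (proj2 hmet)). reflexivity. Qed.
Lemma d_eq x y : d x y = 0 -> x = y. Proof. apply (proj1 (proj2 hmet)). Qed.
Lemma d_sym x y : d x y = d y x. Proof. apply (proj1 (proj2 (proj2 hmet))). Qed.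
Lemma d_tri x y z : d x z <= d x y + d y z. Proof. apply (proj2 (proj2 (proj2 hmet))). Qed.

Lemma ball_open c r : is_open d (fun y => d c y < r).
Proof.
  intros x Hx. exists (r - d c x). split; [lra|].
  intros y Hy. pose proof (d_tri c x y). lra.
Qed.

Definition conv (s : nat -> Y) (y : Y) : Prop :=
  forall eps, eps > 0 -> exists N, forall n, (n >= N)%nat -> d (s n) y < eps.

Lemma conv_le s s' y y' c :
  conv s y -> conv s' y' -> (exists N, forall n, (n >= N)%nat -> d (s n) (s' n) <= c) ->
  d y y' <= c.
Proof.
  intros H1 H2 [N HN].
  destruct (Rle_dec (d y y') c) as [h|h]; [exact h|exfalso].
  set (e := (d y y' - c) / 2).
  destruct (H1 e) as [N1 HN1]; [unfold e; lra|].
  destruct (H2 e) as [N2 HN2]; [unfold e; lra|].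
  set (n := (N + N1 + N2)%nat).
  specialize (HN n ltac:(unfold n; lia)). specialize (HN1 n ltac:(unfold n; lia)).
  specialize (HN2 n ltac:(unfold n; lia)).
  pose proof (d_tri y (s n) y'). pose proof (d_tri (s n) (s' n) y').
  rewrite (d_sym y (s n)) in H. unfold e in *. lra.
Qed.

Lemma conv_ge s s' y y' c :
  conv s y -> conv s' y' -> (exists N, forall n, (n >= N)%nat -> c <= d (s n) (s' n)) ->
  c <= d y y'.
Proof.
  intros H1 H2 [N HN].
  destruct (Rle_dec c (d y y')) as [h|h]; [exact h|exfalso].
  set (e := (c - d y y') / 2).
  destruct (H1 e) as [N1 HN1]; [unfold e; lra|].
  destruct (H2 e) as [N2 HN2]; [unfold e; lra|].
  set (n := (N + N1 + N2)%nat).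
  specialize (HN n ltac:(unfold n; lia)). specialize (HN1 n ltac:(unfold n; lia)).
  specialize (HN2 n ltac:(unfold n; lia)).
  pose proof (d_tri (s n) y (s' n)). pose proof (d_tri y y' (s' n)).
  rewrite (d_sym y' (s' n)) in H0. unfold e in *. lra.
Qed.

Lemma conv_const_le s y z c :
  conv s y -> (exists N, forall n, (n >= N)%nat -> d (s n) z <= c) -> d y z <= c.
Proof.
  intros H1 H2. apply (conv_le s (fun _ => z) y z c H1).
  - intros e he. exists O. intros n _. rewrite d_refl. lra.
  - exact H2.
Qed.

Lemma conv_unique s y y' : conv s y -> conv s y' -> y = y'.
Proof.
  intros H1 H2. apply d_eq. apply Rle_antisym; [|apply d_nonneg].
  apply (conv_le s s y y' 0 H1 H2). exists O. intros. rewrite d_refl. lra.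
Qed.

Lemma conv_ext s s' y : conv s y -> (exists N, forall n, (n >= N)%nat -> s n = s' n) -> conv s' y.
Proof.
  intros H [N HN] e he. destruct (H e he) as [N1 HN1]. exists (N + N1)%nat.
  intros n hn. rewrite <- HN by lia. apply HN1. lia.
Qed.

Lemma conv_sub s y (phi : nat -> nat) : conv s y ->
  (forall N, exists N', forall n, (n >= N')%nat -> (phi n >= N)%nat) -> conv (fun n => s (phi n)) y.
Proof.
  intros H Hphi e he. destruct (H e he) as [N HN]. destruct (Hphi N) as [N' HN'].
  exists N'. intros n hn. apply HN. apply HN'. exact hn.
Qed.

Lemma conv_map (f : Y -> Y) s y :
  (forall eps, eps > 0 -> exists delta, delta > 0 /\ forall z, d y z < delta -> d (f y) (f z) < eps) ->
  conv s y -> conv (fun n => f (s n)) (f y).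
Proof.
  intros Hf H e he. destruct (Hf e he) as [dl [hdl Hdl]].
  destruct (H dl hdl) as [N HN]. exists N. intros n hn.
  rewrite d_sym. apply Hdl. rewrite d_sym. apply HN. exact hn.
Qed.

Context (hcpt : is_compact_space d).

(* Every sequence has a cluster point: otherwise the balls around each point
   that the sequence eventually avoids form an open cover without a finite
   subcover. *)
Lemma cluster_point (s : nat -> Y) : exists y, forall r, r > 0 -> forall N, exists n, (n >= N)%nat /\ d (s n) y < r.
Proof.
  apply NNPP. intros Hno.
  set (U := fun (i : Y * R * nat) (z : Y) =>
     let '(y, r, N) := i in r > 0 /\ d y z < r /\ forall n, (n >= N)%nat -> 2 * r <= d (s n) y).
  destruct (hcpt _ U) as [l Hl].
  - intros [[y r] N] x Hx. simpl in Hx. destruct Hx as [hr [hyx hn]].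
    exists (r - d y x). split; [lra|]. intros z hz. simpl. split; [lra|]. split; [|exact hn].
    pose proof (d_tri y x z). lra.
  - intros z. apply NNPP. intros Hz. apply Hno. exists z. intros r hr N.
    apply NNPP. intros H2. apply Hz. exists (z, r/2, N). simpl. split; [lra|]. split.
    + rewrite d_refl. lra.
    + intros n hn. apply Rnot_lt_le. intros hlt. apply H2. exists n. split; [exact hn|]. lra.
  - set (N := lmax (map (fun i : Y * R * nat => let '(_, _, N) := i in N) l)).
    destruct (Hl (s N)) as [[[y r] N0] [hin hU]]. simpl in hU. destruct hU as [hr [hys hn]].
    assert (N0 <= N)%nat.
    { unfold N. apply lmax_in. apply (in_map (fun i : Y * R * nat => let '(_, _, N) := i in N)) in hin. exact hin. }
    specialize (hn N H). rewrite d_sym in hys. lra.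
Qed.

Lemma cauchy_converges (s : nat -> Y) :
  (forall eps, eps > 0 -> exists N, forall n m, (n >= N)%nat -> (m >= N)%nat -> d (s n) (s m) < eps) ->
  exists y, conv s y.
Proof.
  intros Hc. destruct (cluster_point s) as [y Hy]. exists y. intros e he.
  destruct (Hc (e/2)) as [N HN]; [lra|]. exists N. intros n hn.
  destruct (Hy (e/2) ltac:(lra) N) as [m [hm hd]].
  specialize (HN n m hn hm). pose proof (d_tri (s n) (s m) y). lra.
Qed.

Lemma sequentially_compact (s : nat -> Y) : exists phi : nat -> nat, (forall n, (phi n < phi (S n))%nat) /\
   exists y, conv (fun n => s (phi n)) y.
Proof.
  destruct (cluster_point s) as [y Hy].
  assert (Hp : forall N : nat, forall n : nat, {m : nat | (m >= N)%nat /\ d (s m) y < / INR (S n)}).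
  { intros N n. apply constructive_indefinite_description. apply Hy.
    apply Rinv_0_lt_compat. apply lt_0_INR. lia. }
  set (phi := fix phi n := match n with O => proj1_sig (Hp O O) | S k => proj1_sig (Hp (S (phi k)) (S k)) end).
  exists phi. split.
  - intros n. change (phi n < proj1_sig (Hp (S (phi n)) (S n)))%nat.
    pose proof (proj2_sig (Hp (S (phi n)) (S n))) as [hm _]. lia.
  - exists y. intros e he.
    destruct (inv_succ_small e he) as [N0 hN0]. exists N0. intros n hn.
    assert (Hd : d (s (phi n)) y < / INR (S n)).
    { destruct n; [exact (proj2 (proj2_sig (Hp O O)))|].
      exact (proj2 (proj2_sig (Hp (S (phi n)) (S n)))). }
    assert (/ INR (S n) <= / INR (S N0)).
    { apply Rinv_le_contravar; [apply lt_0_INR; lia|apply le_INR; lia]. }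
    lra.
Qed.

End Metric.

Lemma increasing_ge_id (phi : nat -> nat) : (forall n, (phi n < phi (S n))%nat) -> forall n, (n <= phi n)%nat.
Proof. intros H n. induction n; [lia|]. specialize (H n). lia. Qed.

Section Diagonal.
Context {Y : Type} (d : Y -> Y -> R) (hmet : is_metric d) (hcpt : is_compact_space d).

Lemma extract_pair (f1 f2 : nat -> nat -> Y) (sg : nat -> nat) (j : nat) :
  exists tau : nat -> nat, (forall n, (tau n < tau (S n))%nat) /\
   exists y1 y2, conv d (fun n => f1 (sg (tau n)) j) y1 /\ conv d (fun n => f2 (sg (tau n)) j) y2.
Proof.
  destruct (sequentially_compact d hmet hcpt (fun n => f1 (sg n) j)) as [t1 [ht1 [y1 hy1]]].
  destruct (sequentially_compact d hmet hcpt (fun n => f2 (sg (t1 n)) j)) as [t2 [ht2 [y2 hy2]]].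
  exists (fun n => t1 (t2 n)). split.
  - intros n. specialize (ht2 n). assert (forall a b, (a < b)%nat -> (t1 a < t1 b)%nat).
    { intros a b hab. induction hab. apply ht1. specialize (ht1 m). lia. }
    apply H. exact ht2.
  - exists y1, y2. split; [|exact hy2].
    apply (conv_sub d (fun n => f1 (sg (t1 n)) j) y1 t2 hy1).
    intros N. exists N. intros n hn. pose proof (increasing_ge_id t2 ht2 n). lia.
Qed.

Lemma diagonal_extraction (f1 f2 : nat -> nat -> Y) : exists psi : nat -> nat, (forall n, (n <= psi n)%nat) /\
  exists a1 a2 : nat -> Y, forall j, conv d (fun n => f1 (psi n) j) (a1 j) /\ conv d (fun n => f2 (psi n) j) (a2 j).
Proof.
  assert (Hrefine : forall sg, exists st : nat -> nat -> nat, forall j,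
      (forall n, (st j n < st j (S n))%nat) /\
      exists y1 y2, conv d (fun n => f1 (sg (st j n)) j) y1 /\ conv d (fun n => f2 (sg (st j n)) j) y2).
  { intros sg. apply (choice (fun j (tau : nat -> nat) => (forall n, (tau n < tau (S n))%nat) /\
      exists y1 y2, conv d (fun n => f1 (sg (tau n)) j) y1 /\ conv d (fun n => f2 (sg (tau n)) j) y2)).
    intros j. apply extract_pair. }
  destruct (choice _ Hrefine) as [st Hst].
  (* Sg k is the subsequence refined for the coordinates 0 .. k-1. *)
  set (Sg := fix Sg k := match k with O => fun n : nat => n | S k' => fun n => Sg k' (st (Sg k') k' n) end).
  assert (HR : forall k dd, exists R : nat -> nat, (forall n, (n <= R n)%nat) /\ forall n, Sg (k + dd)%nat n = Sg k (R n)).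
  { intros k dd. induction dd.
    - exists (fun n => n). split; [lia|]. intros n. rewrite Nat.add_0_r. reflexivity.
    - destruct IHdd as [R [hR1 hR2]]. exists (fun n => R (st (Sg (k + dd)%nat) (k + dd)%nat n)). split.
      + intros n. pose proof (increasing_ge_id _ (proj1 (Hst (Sg (k+dd)%nat) (k+dd)%nat)) n).
        specialize (hR1 (st (Sg (k + dd)%nat) (k + dd)%nat n)). lia.
      + intros n. rewrite Nat.add_succ_r. simpl. apply hR2. }
  (* From index j on, the diagonal is a subsequence of Sg (S j). *)
  assert (Htail : forall j (s : nat -> Y) y, conv d (fun n => s (Sg (S j) n)) y ->
      conv d (fun n => s (Sg (S n) n)) y).
  { intros j s y Hc e he. destruct (Hc e he) as [N HN]. exists (N + j)%nat. intros n hn.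
    destruct (HR (S j) (n - j)%nat) as [R [hR1 hR2]].
    replace (S n) with (S j + (n - j))%nat by lia. rewrite hR2. apply HN.
    specialize (hR1 n). lia. }
  exists (fun n => Sg (S n) n). split.
  - intros n. destruct (HR O (S n)) as [R [hR1 hR2]]. rewrite hR2. simpl. apply hR1.
  - assert (Hlim : forall j, exists p : Y * Y, conv d (fun n => f1 (Sg (S n) n) j) (fst p) /\
        conv d (fun n => f2 (Sg (S n) n) j) (snd p)).
    { intros j. destruct (proj2 (Hst (Sg j) j)) as [y1 [y2 [c1 c2]]].
      exists (y1, y2). split; [apply (Htail j (fun m => f1 m j))|apply (Htail j (fun m => f2 m j))]; assumption. }
    destruct (choice _ Hlim) as [p Hp]. exists (fun j => fst (p j)), (fun j => snd (p j)). exact Hp.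
Qed.

End Diagonal.

Section UniformExpansivity.
Context {Y : Type} (d : Y -> Y -> R) (hmet : is_metric d) (hcpt : is_compact_space d)
  (g : Y -> Y) (hcont : continuous_map d g).

Lemma iter_continuous n x : forall eps, eps > 0 -> exists delta, delta > 0 /\
   forall z, d x z < delta -> d (Nat.iter n g x) (Nat.iter n g z) < eps.
Proof.
  induction n; intros e he.
  - exists e. split; [exact he|]. intros z hz. exact hz.
  - destruct (hcont (Nat.iter n g x) e he) as [d1 [hd1 H1]].
    destruct (IHn d1 hd1) as [d2 [hd2 H2]]. exists d2. split; [exact hd2|].
    intros z hz. simpl. apply H1. apply H2. exact hz.
Qed.

Definition two_sided (a : nat -> Y) (t : Z) : Y :=
  if (t <? 0)%Z then a (Z.to_nat (- t)) else Nat.iter (Z.to_nat t) g (a O).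

Lemma two_sided_full_orbit (a : nat -> Y) : (forall j, g (a (S j)) = a j) -> full_orbit g (two_sided a).
Proof.
  intros Ha t. unfold two_sided.
  destruct (Z.ltb_spec t 0) as [h1|h1]; destruct (Z.ltb_spec (t + 1) 0) as [h2|h2].
  - replace (Z.to_nat (- t)) with (S (Z.to_nat (- (t + 1)))) by lia. apply Ha.
  - assert (t = -1)%Z by lia. subst t. simpl. apply (Ha O).
  - lia.
  - replace (Z.to_nat (t + 1)) with (S (Z.to_nat t)) by lia. reflexivity.
Qed.

Lemma limits_backward_chain (p : nat -> Y) (psi : nat -> nat) (a : nat -> Y) :
  (forall n, (n <= psi n)%nat) ->
  (forall j, conv d (fun n => Nat.iter (psi n - j) g (p (psi n))) (a j)) ->
  forall j, g (a (S j)) = a j.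
Proof.
  intros hpsi C j. eapply conv_unique; [exact hmet| |apply C].
  apply (conv_ext d (fun n => g (Nat.iter (psi n - S j) g (p (psi n))))).
  - apply conv_map; [exact hmet| |apply C]. apply hcont.
  - exists (S j). intros n hn. specialize (hpsi n).
    replace (psi n - j)%nat with (S (psi n - S j)) by lia. reflexivity.
Qed.

Context (beta : R) (hce : c_expansive d g beta).

Lemma beta_close_chains_equal (a1 a2 : nat -> Y) :
  (forall j, g (a1 (S j)) = a1 j) -> (forall j, g (a2 (S j)) = a2 j) ->
  (forall j, d (a1 j) (a2 j) <= beta / 2) ->
  (forall t, d (Nat.iter t g (a1 O)) (Nat.iter t g (a2 O)) <= beta / 2) ->
  a1 O = a2 O.
Proof.
  intros B1 B2 D1 D2. destruct hce as [hb Hce].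
  apply NNPP. intros hne.
  destruct (Hce (two_sided a1) (two_sided a2) (two_sided_full_orbit a1 B1)
    (two_sided_full_orbit a2 B2) hne) as [n Hn].
  unfold two_sided in Hn. destruct (n <? 0)%Z.
  - specialize (D1 (Z.to_nat (- n))). lra.
  - specialize (D2 (Z.to_nat n)). lra.
Qed.

Definition uniformly_expansive (M : nat) (eta : R) : Prop := forall a b,
   (forall i, (i <= 2 * M)%nat -> d (Nat.iter i g a) (Nat.iter i g b) <= beta / 2) ->
   d (Nat.iter M g a) (Nat.iter M g b) < eta.

(* If no M works, pick bad pairs for every M; a diagonal
   limit of their orbits centred at time M gives two full orbits staying
   beta/2-close forever, yet eta-apart at time 0, contradicting c-expansivity. *)
Lemma uniform_expansivity eta : eta > 0 -> exists M : nat, uniformly_expansive M eta.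
Proof.
  intros heta. apply NNPP. intros Hno.
  assert (H : forall M : nat, exists p : Y * Y,
     (forall i, (i <= 2 * M)%nat -> d (Nat.iter i g (fst p)) (Nat.iter i g (snd p)) <= beta / 2) /\
     eta <= d (Nat.iter M g (fst p)) (Nat.iter M g (snd p))).
  { intros M. apply NNPP. intros H1. apply Hno. exists M. intros a b Hab.
    apply Rnot_le_lt. intros H2. apply H1. exists (a, b). simpl. split; assumption. }
  destruct (choice _ H) as [P HP].
  destruct (diagonal_extraction d hmet hcpt (fun M j => Nat.iter (M - j) g (fst (P M)))
    (fun M j => Nat.iter (M - j) g (snd (P M)))) as [psi [hpsi [a1 [a2 Hc]]]].
  assert (B1 := limits_backward_chain (fun M => fst (P M)) psi a1 hpsi (fun j => proj1 (Hc j))).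
  assert (B2 := limits_backward_chain (fun M => snd (P M)) psi a2 hpsi (fun j => proj2 (Hc j))).
  assert (D1 : forall j, d (a1 j) (a2 j) <= beta / 2).
  { intros j. apply (conv_le d hmet _ _ _ _ _ (proj1 (Hc j)) (proj2 (Hc j))). exists O. intros n _.
    apply (proj1 (HP (psi n))). lia. }
  assert (D2 : forall t, d (Nat.iter t g (a1 O)) (Nat.iter t g (a2 O)) <= beta / 2).
  { intros t. apply (conv_le d hmet (fun n => Nat.iter t g (Nat.iter (psi n - 0) g (fst (P (psi n)))))
      (fun n => Nat.iter t g (Nat.iter (psi n - 0) g (snd (P (psi n)))))).
    - apply conv_map; [exact hmet| |apply (proj1 (Hc O))]. apply iter_continuous.
    - apply conv_map; [exact hmet| |apply (proj2 (Hc O))]. apply iter_continuous.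
    - exists t. intros n hn. rewrite <- !Nat.iter_add. specialize (hpsi n).
      apply (proj1 (HP (psi n))). lia. }
  assert (D3 : eta <= d (a1 O) (a2 O)).
  { apply (conv_ge d hmet _ _ _ _ _ (proj1 (Hc O)) (proj2 (Hc O))). exists O. intros n _.
    rewrite Nat.sub_0_r. apply (proj2 (HP (psi n))). }
  rewrite (beta_close_chains_equal a1 a2 B1 B2 D1 D2), (d_refl d hmet) in D3. lra.
Qed.

End UniformExpansivity.

(* Given e-shadowing with
   constant delta, for each k choose a point e-tracing X from time -k on; the
   images g^k of these points form a Cauchy sequence by uniform expansivity
   (2e <= beta/2), and the limit e-traces X from time 0 on. *)
Section Trace.
Context {Y : Type} (d : Y -> Y -> R) (hmet : is_metric d) (hcpt : is_compact_space d)
  (g : Y -> Y) (hcont : continuous_map d g) (y0 : Y)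
  (beta e delta : R) (hce : c_expansive d g beta) (he : e > 0) (he2 : 2 * e <= beta / 2)
  (Hsh : forall x : nat -> Y, (forall i, d (g (x i)) (x (S i)) < delta) ->
      exists z, forall i, d (Nat.iter i g z) (x i) < e).

Definition pseudo_orbit (X : Z -> Y) : Prop := forall t, d (g (X t)) (X (t + 1)%Z) < delta.

Definition shadow_at (X : Z -> Y) (k : nat) : Y :=
  epsilon (inhabits y0) (fun z => forall i : nat, d (Nat.iter i g z) (X (Z.of_nat i - Z.of_nat k)%Z) < e).

Lemma shadow_at_spec X : pseudo_orbit X -> forall k i, d (Nat.iter i g (shadow_at X k)) (X (Z.of_nat i - Z.of_nat k)%Z) < e.
Proof.
  intros HX k. unfold shadow_at. apply epsilon_spec.
  apply (Hsh (fun i => X (Z.of_nat i - Z.of_nat k)%Z)). intros i.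
  replace (Z.of_nat (S i) - Z.of_nat k)%Z with ((Z.of_nat i - Z.of_nat k) + 1)%Z by lia. apply HX.
Qed.

Definition shadow_approx (X : Z -> Y) (k : nat) : Y := Nat.iter k g (shadow_at X k).

Lemma shadow_approx_close X X' M eta : pseudo_orbit X -> pseudo_orbit X' -> uniformly_expansive d g beta M eta ->
  (forall t, (- Z.of_nat M <= t <= Z.of_nat M)%Z -> X t = X' t) ->
  forall k k', (k >= M)%nat -> (k' >= M)%nat -> d (shadow_approx X k) (shadow_approx X' k') < eta.
Proof.
  intros HX HX' HM Heq k k' hk hk'. unfold shadow_approx.
  assert (E : forall k Z, (k >= M)%nat -> Nat.iter k g Z = Nat.iter M g (Nat.iter (k - M) g Z)).
  { intros k0 Z h. rewrite <- Nat.iter_add. f_equal. lia. }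
  rewrite (E k) by exact hk. rewrite (E k') by exact hk'.
  apply HM. intros i hi. rewrite <- !Nat.iter_add.
  pose proof (shadow_at_spec X HX k (i + (k - M))) as h1.
  pose proof (shadow_at_spec X' HX' k' (i + (k' - M))) as h2.
  replace (Z.of_nat (i + (k - M)) - Z.of_nat k)%Z with (Z.of_nat i - Z.of_nat M)%Z in h1 by lia.
  replace (Z.of_nat (i + (k' - M)) - Z.of_nat k')%Z with (Z.of_nat i - Z.of_nat M)%Z in h2 by lia.
  rewrite Heq in h1 by lia.
  pose proof (d_tri d hmet (Nat.iter (i + (k - M)) g (shadow_at X k)) (X' (Z.of_nat i - Z.of_nat M)%Z)
     (Nat.iter (i + (k' - M)) g (shadow_at X' k'))). rewrite (d_sym d hmet (X' _)) in H. lra.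
Qed.

Lemma shadow_approx_orbit X a0 M eta : pseudo_orbit X -> uniformly_expansive d g beta M eta ->
  (forall t, (- Z.of_nat M <= t <= Z.of_nat M)%Z -> X t = Nat.iter (Z.to_nat (t + Z.of_nat M)) g a0) ->
  forall k, (k >= M)%nat -> d (shadow_approx X k) (Nat.iter M g a0) < eta.
Proof.
  intros HX HM Heq k hk. unfold shadow_approx.
  assert (E : forall Z, Nat.iter k g Z = Nat.iter M g (Nat.iter (k - M) g Z)).
  { intros Z. rewrite <- Nat.iter_add. f_equal. lia. }
  rewrite !E.
  apply HM. intros i hi. rewrite <- !Nat.iter_add.
  pose proof (shadow_at_spec X HX k (i + (k - M))) as h1.
  replace (Z.of_nat (i + (k - M)) - Z.of_nat k)%Z with (Z.of_nat i - Z.of_nat M)%Z in h1 by lia.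
  rewrite Heq in h1 by lia. replace (Z.to_nat (Z.of_nat i - Z.of_nat M + Z.of_nat M)) with i in h1 by lia.
  lra.
Qed.

Lemma shadow_approx_cauchy X : pseudo_orbit X -> exists y, conv d (shadow_approx X) y.
Proof.
  intros HX. apply (cauchy_converges d hmet hcpt). intros eta heta.
  destruct (uniform_expansivity d hmet hcpt g hcont beta hce eta heta) as [M HM].
  exists M. intros n m hn hm. apply (shadow_approx_close X X M eta HX HX HM); auto.
Qed.

Definition shadow_point (X : Z -> Y) : Y := epsilon (inhabits y0) (fun y => conv d (shadow_approx X) y).

Lemma shadow_point_spec X : pseudo_orbit X -> conv d (shadow_approx X) (shadow_point X).
Proof. intros HX. unfold shadow_point. apply epsilon_spec. apply shadow_approx_cauchy. exact HX. Qed.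

Lemma shadow_point_traces X : pseudo_orbit X -> forall t : nat, d (Nat.iter t g (shadow_point X)) (X (Z.of_nat t)) <= e.
Proof.
  intros HX t. apply (conv_const_le d hmet (fun n => Nat.iter t g (shadow_approx X n))).
  - apply conv_map; [exact hmet| |apply shadow_point_spec; exact HX]. apply (iter_continuous d g hcont).
  - exists O. intros n _. unfold shadow_approx. rewrite <- Nat.iter_add.
    pose proof (shadow_at_spec X HX n (t + n)). replace (Z.of_nat (t + n) - Z.of_nat n)%Z with (Z.of_nat t) in H by lia. lra.
Qed.

Lemma shadow_point_close X X' M eta : pseudo_orbit X -> pseudo_orbit X' -> uniformly_expansive d g beta M eta ->
  (forall t, (- Z.of_nat M <= t <= Z.of_nat M)%Z -> X t = X' t) -> d (shadow_point X) (shadow_point X') <= eta.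
Proof.
  intros HX HX' HM Heq. apply (conv_le d hmet (shadow_approx X) (shadow_approx X')); try (apply shadow_point_spec; assumption).
  exists M. intros n hn. left. apply (shadow_approx_close X X' M eta); auto.
Qed.

Lemma shadow_point_orbit X a0 M eta : pseudo_orbit X -> uniformly_expansive d g beta M eta ->
  (forall t, (- Z.of_nat M <= t <= Z.of_nat M)%Z -> X t = Nat.iter (Z.to_nat (t + Z.of_nat M)) g a0) ->
  d (shadow_point X) (Nat.iter M g a0) <= eta.
Proof.
  intros HX HM Heq. apply (conv_const_le d hmet (shadow_approx X)); [apply shadow_point_spec; exact HX|].
  exists M. intros n hn. left. apply (shadow_approx_orbit X a0 M eta); auto.
Qed.
End Trace.

Section Blocks.
Context {Y : Type} (d : Y -> Y -> R) (hmet : is_metric d) (g : Y -> Y) (delta : R) (hdelta : delta > 0)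
  (L : nat) (hL : (1 <= L)%nat).

Definition unfold_blocks (B : Z -> Y) (t : Z) : Y :=
  Nat.iter (Z.to_nat (t mod Z.of_nat L)) g (B (t / Z.of_nat L)%Z).

Lemma unfold_blocks_at B k (r : nat) : (r < L)%nat -> unfold_blocks B (Z.of_nat L * k + Z.of_nat r)%Z = Nat.iter r g (B k).
Proof.
  intros hr. unfold unfold_blocks.
  rewrite <- (Z.div_unique_pos (Z.of_nat L * k + Z.of_nat r) (Z.of_nat L) k (Z.of_nat r)) by lia.
  rewrite <- (Z.mod_unique_pos (Z.of_nat L * k + Z.of_nat r) (Z.of_nat L) k (Z.of_nat r)) by lia.
  rewrite ?Nat2Z.id. reflexivity.
Qed.

Lemma unfold_blocks_at0 B k : unfold_blocks B (Z.of_nat L * k)%Z = B k.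
Proof. pose proof (unfold_blocks_at B k 0 ltac:(lia)). rewrite Z.add_0_r in H. exact H. Qed.

Lemma unfold_blocks_pseudo B : (forall k, d (Nat.iter L g (B k)) (B (k + 1)%Z) < delta) ->
  forall t, d (g (unfold_blocks B t)) (unfold_blocks B (t + 1)%Z) < delta.
Proof.
  intros HB t.
  pose proof (Z.div_mod t (Z.of_nat L) ltac:(lia)) as E.
  pose proof (Z.mod_pos_bound t (Z.of_nat L) ltac:(lia)) as Hb.
  set (q := (t / Z.of_nat L)%Z) in *. set (r := (t mod Z.of_nat L)%Z) in *.
  assert (Ht : t = (Z.of_nat L * q + Z.of_nat (Z.to_nat r))%Z) by lia.
  rewrite Ht. rewrite unfold_blocks_at by lia.
  destruct (Z.eq_dec (r + 1) (Z.of_nat L)) as [h|h].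
  - replace (Z.of_nat L * q + Z.of_nat (Z.to_nat r) + 1)%Z with (Z.of_nat L * (q + 1) + Z.of_nat 0)%Z by lia.
    rewrite unfold_blocks_at by lia. simpl.
    replace (g (Nat.iter (Z.to_nat r) g (B q))) with (Nat.iter L g (B q)).
    + apply HB.
    + transitivity (Nat.iter (S (Z.to_nat r)) g (B q)); [f_equal; lia|reflexivity].
  - replace (Z.of_nat L * q + Z.of_nat (Z.to_nat r) + 1)%Z with (Z.of_nat L * q + Z.of_nat (S (Z.to_nat r)))%Z by lia.
    rewrite unfold_blocks_at by lia. simpl. rewrite (d_refl d hmet). lra.
Qed.

End Blocks.

(* Arithmetic of the coding positions: slot j occupies the block positions
   slot j .. slot j + 3; slots are sparse, with gaps growing linearly in j. *)
Section SlotArithmetic.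
Local Open Scope nat_scope.

Lemma free_time_in_window (cs : nat -> nat) (R T0 J0 : nat) :
  (forall j j', (j < j')%nat -> cs j < cs j') ->
  (forall j, (j >= J0)%nat -> cs j + 4 * R + 4 <= cs (S j)) -> cs J0 + R < T0 ->
  forall m, exists t, m <= t < m + T0 + 2 * R + 2 /\ T0 <= t /\ forall j, t + R < cs j \/ cs j + R < t.
Proof.
  intros Hmono Hgap HT0 m.
  assert (Hmono' : forall j j', j <= j' -> cs j <= cs j').
  { intros j j' h. destruct (Nat.eq_dec j j'); [subst; lia|]. specialize (Hmono j j' ltac:(lia)). lia. }
  assert (Hgap' : forall j j', J0 <= j -> j < j' -> cs j + 4 * R + 4 <= cs j').
  { intros j j' h1 h2. specialize (Hgap j h1). specialize (Hmono' (S j) j' h2). lia. }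
  destruct (classic (forall j, m + T0 + R < cs j \/ cs j + R < m + T0)) as [Hg|Hb].
  - exists (m + T0). split; [lia|]. split; [lia|]. exact Hg.
  - apply not_all_ex_not in Hb as [j Hj].
    assert (Hj' : cs j <= m + T0 + R /\ m + T0 <= cs j + R) by lia.
    assert (hjJ : J0 < j).
    { destruct (Nat.lt_ge_cases J0 j) as [h|h]; [exact h|]. specialize (Hmono' j J0 h). lia. }
    exists (cs j + R + 1). split; [lia|]. split; [lia|].
    intros j'. destruct (Nat.lt_trichotomy j' j) as [h|[h|h]].
    + right. destruct (Nat.lt_ge_cases j' J0) as [h2|h2].
      * specialize (Hmono j' J0 h2). lia.
      * specialize (Hgap' j' j h2 h). lia.
    + subst. right. lia.
    + left. specialize (Hgap' j j' ltac:(lia) h). lia.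
Qed.

Definition slot (j : nat) : nat := (16 * (j + 1) * (j + 1))%nat.

Lemma slot_gap j j' : (j < j')%nat -> (slot j + 48 <= slot j')%nat.
Proof. intros h. unfold slot. nia. Qed.

Lemma slot_ge j : (j <= slot j)%nat.
Proof. unfold slot. nia. Qed.

Lemma slot_unique j j' K : (slot j <= K < slot j + 4)%nat -> (slot j' <= K < slot j' + 4)%nat -> j = j'.
Proof.
  intros h1 h2. destruct (Nat.lt_trichotomy j j') as [h|[h|h]]; auto.
  - pose proof (slot_gap _ _ h). lia.
  - pose proof (slot_gap _ _ h). lia.
Qed.

(* Bit j of the code of (c, w): writing j = <p, q> (Cantor pairing), it is
   w (p/2) for even p and the indicator of c = p/2 for odd p.  Every bit of
   w and the index c are thus repeated infinitely often. *)
Definition code_bit (c : nat) (w : nat -> bool) (j : nat) : bool :=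
  let p := Cantor.of_nat j in
  if Nat.even (fst p) then w (Nat.div2 (fst p)) else Nat.eqb (Nat.div2 (fst p)) c.

Lemma cantor_fst_le j : (fst (Cantor.of_nat j) <= j)%nat.
Proof.
  pose proof (Cantor.cancel_to_of j). destruct (Cantor.of_nat j) as [a b] eqn:E. simpl.
  pose proof (Cantor.to_nat_non_decreasing a b). lia.
Qed.

Definition slot_index (K : nat) : nat := epsilon (inhabits 0%nat) (fun j => (slot j <= K < slot j + 4)%nat).

Lemma slot_index_spec K j : (slot j <= K < slot j + 4)%nat -> slot_index K = j.
Proof.
  intros h. assert (H : (slot (slot_index K) <= K < slot (slot_index K) + 4)%nat).
  { unfold slot_index. apply epsilon_spec. exists j. exact h. }
  apply (slot_unique _ _ K H h).
Qed.

Lemma slot_gap_below j j' : (j' < j)%nat -> (slot j' + 32 * j + 16 <= slot j)%nat.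
Proof. intros h. unfold slot. nia. Qed.
Lemma slot_gap_above j j' : (j < j')%nat -> (slot j + 32 * j + 48 <= slot j')%nat.
Proof. intros h. unfold slot. nia. Qed.

Lemma codes_differ c w c' w' : (c <> c' \/ w <> w') -> forall J, exists j, (j >= J)%nat /\ code_bit c w j <> code_bit c' w' j.
Proof.
  intros H J. destruct (Nat.eq_dec c c') as [hc|hc].
  - destruct H as [H|H]; [contradiction|]. subst c'.
    assert (exists i, w i <> w' i).
    { apply NNPP. intros hn. apply H. apply functional_extensionality. intros i.
      apply NNPP. intros hi. apply hn. exists i. exact hi. }
    destruct H0 as [i hi]. exists (Cantor.to_nat ((2 * i)%nat, J)). split.
    + pose proof (Cantor.to_nat_non_decreasing (2 * i)%nat J). lia.
    + unfold code_bit. rewrite Cantor.cancel_of_to. cbn [fst].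
      rewrite Nat.even_mul, Nat.div2_double. exact hi.
  - exists (Cantor.to_nat ((2 * c + 1)%nat, J)). split.
    + pose proof (Cantor.to_nat_non_decreasing (2 * c + 1)%nat J). lia.
    + unfold code_bit. rewrite Cantor.cancel_of_to. cbn [fst].
      replace (Nat.even (2 * c + 1)) with false.
      2:{ replace (2 * c + 1)%nat with (S (2 * c)) by lia. rewrite Nat.even_succ, Nat.odd_mul. reflexivity. }
      replace (Nat.div2 (2 * c + 1)) with c.
      2:{ replace (2 * c + 1)%nat with (S (2 * c)) by lia. rewrite Nat.div2_succ_double. reflexivity. }
      rewrite Nat.eqb_refl. intros E. symmetry in E. apply Nat.eqb_eq in E. apply hc. exact E.
Qed.

End SlotArithmetic.

(* The L-step connections rho: u ~> u, gam: u ~> q1 and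
   kap: q1 ~> u are given, and for each index c a prefix made of an orbit
   segment through a0 c of length 2 A c blocks, entered from u via zin c
   (C1 c blocks) and left back to u via zout c (C2 c blocks). *)
Section Coding.
Context {Y : Type} (d : Y -> Y -> R) (hmet : is_metric d) (g : Y -> Y)
  (delta : R) (hdelta : delta > 0) (L : nat) (hL : (1 <= L)%nat)
  (u q1 rho gam kap : Y)
  (hr1 : d u rho < delta / 2) (hr2 : d u (Nat.iter L g rho) < delta / 2)
  (hg1 : d u gam < delta / 2) (hg2 : d q1 (Nat.iter L g gam) < delta / 2)
  (hk1 : d q1 kap < delta / 2) (hk2 : d u (Nat.iter L g kap) < delta / 2)
  (A C1 C2 : nat -> nat) (zin a0 zout : nat -> Y)
  (hA : forall c, (1 <= A c)%nat) (hC1 : forall c, (1 <= C1 c)%nat) (hC2 : forall c, (1 <= C2 c)%nat)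
  (hzi1 : forall c, d u (zin c) < delta / 2)
  (hzi2 : forall c, d (a0 c) (Nat.iter (C1 c * L) g (zin c)) < delta / 2)
  (hzo1 : forall c, d (Nat.iter (2 * A c * L) g (a0 c)) (zout c) < delta / 2)
  (hzo2 : forall c, d u (Nat.iter (C2 c * L) g (zout c)) < delta / 2).

Definition slot_value (p : nat) (b : bool) : Y :=
  match p with O => gam | 1%nat => kap | 2%nat => if b then gam else rho | _ => if b then kap else rho end.

(* The prefix occupies the block positions -(A+C1) .. A+C2-1. *)
Definition prefix_end (c : nat) : nat := (A c + C2 c)%nat.

Definition code_blocks (c : nat) (w : nat -> bool) (k : Z) : Y :=
  if (k <? - Z.of_nat (A c + C1 c))%Z then rho
  else if (k <? - Z.of_nat (A c))%Z then Nat.iter (Z.to_nat (k + Z.of_nat (A c + C1 c)) * L) g (zin c)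
  else if (k <? Z.of_nat (A c))%Z then Nat.iter (Z.to_nat (k + Z.of_nat (A c)) * L) g (a0 c)
  else if (k <? Z.of_nat (prefix_end c))%Z then Nat.iter (Z.to_nat (k - Z.of_nat (A c)) * L) g (zout c)
  else let K := Z.to_nat k in let j := slot_index K in
    if (prefix_end c <=? slot j)%nat && (slot j <=? K)%nat && (K <? slot j + 4)%nat then slot_value (K - slot j) (code_bit c w j) else rho.

Lemma code_blocks_slot c w j K : (prefix_end c <= slot j)%nat -> (slot j <= K < slot j + 4)%nat ->
  code_blocks c w (Z.of_nat K) = slot_value (K - slot j) (code_bit c w j).
Proof.
  intros h1 h2. unfold code_blocks, prefix_end in *.
  destruct (Z.ltb_spec (Z.of_nat K) (- Z.of_nat (A c + C1 c))); [lia|].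
  destruct (Z.ltb_spec (Z.of_nat K) (- Z.of_nat (A c))); [lia|].
  destruct (Z.ltb_spec (Z.of_nat K) (Z.of_nat (A c))); [lia|].
  destruct (Z.ltb_spec (Z.of_nat K) (Z.of_nat (A c + C2 c))); [lia|].
  rewrite Nat2Z.id. rewrite (slot_index_spec K j h2).
  replace ((A c + C2 c <=? slot j)%nat && (slot j <=? K)%nat && (K <? slot j + 4)%nat) with true; [reflexivity|].
  symmetry. apply andb_true_iff; split; [apply andb_true_iff; split|]; apply Nat.leb_le || apply Nat.ltb_lt; lia.
Qed.

Lemma code_blocks_rho c w K : (prefix_end c <= K)%nat -> (forall j, (prefix_end c <= slot j)%nat -> ~ (slot j <= K < slot j + 4)%nat) ->
  code_blocks c w (Z.of_nat K) = rho.
Proof.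
  intros h1 h2. unfold code_blocks, prefix_end in *.
  destruct (Z.ltb_spec (Z.of_nat K) (- Z.of_nat (A c + C1 c))); [lia|].
  destruct (Z.ltb_spec (Z.of_nat K) (- Z.of_nat (A c))); [lia|].
  destruct (Z.ltb_spec (Z.of_nat K) (Z.of_nat (A c))); [lia|].
  destruct (Z.ltb_spec (Z.of_nat K) (Z.of_nat (A c + C2 c))); [lia|].
  rewrite Nat2Z.id.
  destruct ((A c + C2 c <=? slot (slot_index K))%nat && (slot (slot_index K) <=? K)%nat && (K <? slot (slot_index K) + 4)%nat) eqn:E; [|reflexivity].
  exfalso. apply andb_true_iff in E as [E E3]. apply andb_true_iff in E as [E1 E2].
  apply Nat.leb_le in E1, E2. apply Nat.ltb_lt in E3. apply (h2 (slot_index K)); [exact E1|lia].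
Qed.

Lemma link_via p V V' : d p (Nat.iter L g V) < delta / 2 -> d p V' < delta / 2 -> d (Nat.iter L g V) V' < delta.
Proof. intros h1 h2. pose proof (d_tri d hmet (Nat.iter L g V) p V'). rewrite (d_sym d hmet _ p) in H. lra. Qed.
Lemma link_eq V V' : Nat.iter L g V = V' -> d (Nat.iter L g V) V' < delta.
Proof. intros h. rewrite h, (d_refl d hmet). lra. Qed.

(* After the prefix every block is rho, gam or kap, linked through u or q1. *)
Lemma chain_after_prefix c w K : (prefix_end c <= K)%nat ->
  d (Nat.iter L g (code_blocks c w (Z.of_nat K))) (code_blocks c w (Z.of_nat (S K))) < delta.
Proof.
  intros hK.
  destruct (classic (exists j, (prefix_end c <= slot j)%nat /\ (slot j <= S K < slot j + 4)%nat)) as [[j [hj1 hj2]]|hno].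
  - rewrite (code_blocks_slot c w j (S K) hj1 hj2).
    destruct (Nat.eq_dec (S K) (slot j)) as [e0|e0].
    + rewrite e0, Nat.sub_diag. simpl.
      rewrite code_blocks_rho; [apply (link_via u); assumption|lia|].
      intros j' hj' hin. destruct (Nat.lt_trichotomy j' j) as [h|[h|h]].
      * pose proof (slot_gap _ _ h). lia.
      * subst. lia.
      * pose proof (slot_gap _ _ h). lia.
    + rewrite (code_blocks_slot c w j K hj1) by lia.
      destruct (K - slot j)%nat as [|[|[|p]]] eqn:Ep; replace (S K - slot j)%nat with (S (K - slot j)) by lia; rewrite Ep; simpl.
      * apply (link_via q1); assumption.
      * destruct (code_bit c w j); apply (link_via u); assumption.
      * destruct (code_bit c w j); [apply (link_via q1)|apply (link_via u)]; assumption.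
      * lia.
  - rewrite (code_blocks_rho c w (S K)); [|lia|].
    2:{ intros j hj hin. apply hno. exists j. split; assumption. }
    destruct (classic (exists j, (prefix_end c <= slot j)%nat /\ (slot j <= K < slot j + 4)%nat)) as [[j [hj1 hj2]]|hno2].
    + rewrite (code_blocks_slot c w j K hj1 hj2).
      assert (K - slot j = 3)%nat.
      { destruct (Nat.eq_dec (K - slot j) 3); [assumption|]. exfalso. apply hno. exists j. split; [assumption|lia]. }
      rewrite H. simpl. destruct (code_bit c w j); apply (link_via u); assumption.
    + rewrite (code_blocks_rho c w K); [apply (link_via u); assumption|lia|].
      intros j hj hin. apply hno2. exists j. split; assumption.
Qed.

Lemma iter_L_mul n V : Nat.iter L g (Nat.iter (n * L) g V) = Nat.iter (S n * L) g V.
Proof. rewrite <- Nat.iter_add. f_equal; lia. Qed.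

(* Inside the prefix the blocks are consecutive pieces of orbits, glued at
   the three junctions rho ~> zin, zin ~> a0 and a0 ~> zout. *)
Lemma chain_in_prefix c w k : (k + 1 < Z.of_nat (prefix_end c))%Z ->
  d (Nat.iter L g (code_blocks c w k)) (code_blocks c w (k + 1)%Z) < delta.
Proof.
  intros hk. pose proof (hA c). pose proof (hC1 c). pose proof (hC2 c).
  unfold code_blocks, prefix_end in *.
  destruct (Z.ltb_spec k (- Z.of_nat (A c + C1 c))) as [h1|h1];
  destruct (Z.ltb_spec (k + 1) (- Z.of_nat (A c + C1 c))) as [h1'|h1']; try lia.
  - apply (link_via u); assumption.
  - destruct (Z.ltb_spec (k + 1) (- Z.of_nat (A c))); [|lia].
    replace (Z.to_nat (k + 1 + Z.of_nat (A c + C1 c)) * L)%nat with O by nia. simpl.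
    apply (link_via u); auto.
  - destruct (Z.ltb_spec k (- Z.of_nat (A c))) as [h2|h2];
    destruct (Z.ltb_spec (k + 1) (- Z.of_nat (A c))) as [h2'|h2']; try lia.
    + apply link_eq. rewrite iter_L_mul. apply (f_equal (fun n => Nat.iter (n * L) g _)). lia.
    + destruct (Z.ltb_spec (k + 1) (Z.of_nat (A c))); [|lia].
      replace (Z.to_nat (k + 1 + Z.of_nat (A c)) * L)%nat with O by nia. simpl.
      rewrite iter_L_mul. replace (S (Z.to_nat (k + Z.of_nat (A c + C1 c)))) with (C1 c) by lia.
      rewrite (d_sym d hmet). pose proof (hzi2 c). lra.
    + destruct (Z.ltb_spec k (Z.of_nat (A c))) as [h3|h3];
      destruct (Z.ltb_spec (k + 1) (Z.of_nat (A c))) as [h3'|h3']; try lia.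
      * apply link_eq. rewrite iter_L_mul. apply (f_equal (fun n => Nat.iter (n * L) g _)). lia.
      * destruct (Z.ltb_spec (k + 1) (Z.of_nat (A c + C2 c))); [|lia].
        replace (Z.to_nat (k + 1 - Z.of_nat (A c)) * L)%nat with O by nia. simpl.
        rewrite iter_L_mul. replace (S (Z.to_nat (k + Z.of_nat (A c))) * L)%nat with (2 * A c * L)%nat by nia.
        pose proof (hzo1 c). lra.
      * destruct (Z.ltb_spec k (Z.of_nat (A c + C2 c))); [|lia].
        destruct (Z.ltb_spec (k + 1) (Z.of_nat (A c + C2 c))); [|lia].
        apply link_eq. rewrite iter_L_mul. apply (f_equal (fun n => Nat.iter (n * L) g _)). lia.
Qed.

Lemma first_free_block_near_u c w : d u (code_blocks c w (Z.of_nat (prefix_end c))) < delta / 2.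
Proof.
  destruct (classic (exists j, (prefix_end c <= slot j)%nat /\ (slot j <= prefix_end c < slot j + 4)%nat))
    as [[j [hj1 hj2]]|hno].
  - rewrite (code_blocks_slot c w j _ hj1 hj2). replace (prefix_end c - slot j)%nat with O by lia. simpl. assumption.
  - rewrite code_blocks_rho; [assumption|lia|]. intros j hj hin. apply hno. exists j. split; assumption.
Qed.

Lemma chain_into_slots c w k : (k + 1 = Z.of_nat (prefix_end c))%Z ->
  d (Nat.iter L g (code_blocks c w k)) (code_blocks c w (k + 1)%Z) < delta.
Proof.
  intros hk. pose proof (hA c). pose proof (hC2 c).
  rewrite hk. apply (link_via u); [|apply first_free_block_near_u].
  unfold code_blocks, prefix_end in *.
  destruct (Z.ltb_spec k (- Z.of_nat (A c + C1 c))); [lia|].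
  destruct (Z.ltb_spec k (- Z.of_nat (A c))); [lia|].
  destruct (Z.ltb_spec k (Z.of_nat (A c))); [lia|].
  destruct (Z.ltb_spec k (Z.of_nat (A c + C2 c))); [|lia].
  rewrite iter_L_mul. replace (S (Z.to_nat (k - Z.of_nat (A c)))) with (C2 c) by lia. apply hzo2.
Qed.

Lemma code_blocks_chain c w k : d (Nat.iter L g (code_blocks c w k)) (code_blocks c w (k + 1)%Z) < delta.
Proof.
  destruct (Z_lt_le_dec (k + 1) (Z.of_nat (prefix_end c))) as [hk|hk]; [exact (chain_in_prefix c w k hk)|].
  destruct (Z.eq_dec (k + 1) (Z.of_nat (prefix_end c))) as [he|he]; [exact (chain_into_slots c w k he)|].
  replace k with (Z.of_nat (Z.to_nat k)) by lia.
  replace (Z.of_nat (Z.to_nat k) + 1)%Z with (Z.of_nat (S (Z.to_nat k))) by lia.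
  apply chain_after_prefix. lia.
Qed.

End Coding.

Lemma finite_min_radius (Q : nat -> R -> Prop) : (forall i dl dl', 0 < dl' <= dl -> Q i dl -> Q i dl') ->
  (forall i, exists dl, dl > 0 /\ Q i dl) ->
  forall n, exists dl, dl > 0 /\ forall i, (i < n)%nat -> Q i dl.
Proof.
  intros Hm H n. induction n.
  - exists 1. split; [lra|]. intros i hi. lia.
  - destruct IHn as [d1 [hd1 H1]]. destruct (H n) as [d2 [hd2 H2]].
    assert (0 < Rmin d1 d2) by (apply Rmin_pos; assumption).
    exists (Rmin d1 d2). split; [assumption|].
    intros i hi. destruct (Nat.eq_dec i n) as [->|hne].
    + apply (Hm n d2); [split; [assumption|apply Rmin_r]|exact H2].
    + apply (Hm i d1); [split; [assumption|apply Rmin_l]|apply H1; lia].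
Qed.

Section Main.
Context {Y : Type} (d : Y -> Y -> R) (hmet : is_metric d) (hcpt : is_compact_space d)
  (g : Y -> Y) (hcont : continuous_map d g) (y0 : Y)
  (beta e delta : R) (hce : c_expansive d g beta) (he : e > 0) (he2 : 2 * e <= beta / 2)
  (Hsh : forall x : nat -> Y, (forall i, d (g (x i)) (x (S i)) < delta) ->
      exists z, forall i, d (Nat.iter i g z) (x i) < e)
  (hdelta : delta > 0) (hde : delta <= e)
  (L : nat) (hL : (1 <= L)%nat)
  (u q1 rho gam kap : Y) (hsep : 6 * e < d u q1)
  (hr1 : d u rho < delta / 2) (hr2 : d u (Nat.iter L g rho) < delta / 2)
  (hg1 : d u gam < delta / 2) (hg2 : d q1 (Nat.iter L g gam) < delta / 2)
  (hk1 : d q1 kap < delta / 2) (hk2 : d u (Nat.iter L g kap) < delta / 2)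
  (A C1 C2 : nat -> nat) (zin a0 zout : nat -> Y)
  (hA : forall c, (1 <= A c)%nat) (hC1 : forall c, (1 <= C1 c)%nat) (hC2 : forall c, (1 <= C2 c)%nat)
  (hzi1 : forall c, d u (zin c) < delta / 2)
  (hzi2 : forall c, d (a0 c) (Nat.iter (C1 c * L) g (zin c)) < delta / 2)
  (hzo1 : forall c, d (Nat.iter (2 * A c * L) g (a0 c)) (zout c) < delta / 2)
  (hzo2 : forall c, d u (Nat.iter (C2 c * L) g (zout c)) < delta / 2).

Definition blocks c w := code_blocks g L rho gam kap A C1 C2 zin a0 zout c w.
Definition code_orbit c w := unfold_blocks g L (blocks c w).
Definition code_point c w := shadow_point d g y0 e (code_orbit c w).

Lemma code_orbit_pseudo c w : pseudo_orbit d g delta (code_orbit c w).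
Proof.
  intros t. apply (unfold_blocks_pseudo d hmet g delta hdelta L hL).
  intros k. apply (code_blocks_chain d hmet g delta hdelta L hL u q1 rho gam kap hr1 hr2 hg1 hg2 hk1 hk2
    A C1 C2 zin a0 zout hA hC1 hC2 hzi1 hzi2 hzo1 hzo2).
Qed.

Lemma code_point_traces c w K : d (Nat.iter (L * K) g (code_point c w)) (blocks c w (Z.of_nat K)) <= e.
Proof.
  pose proof (shadow_point_traces d hmet hcpt g hcont y0 beta e delta hce he2 Hsh (code_orbit c w) (code_orbit_pseudo c w) (L * K)).
  unfold code_orbit in H. rewrite Nat2Z.inj_mul, (unfold_blocks_at0 g L hL) in H. exact H.
Qed.

(* kap lies near q1 and rho near u, so points following them are more than
   d(u,q1)/2 apart. *)
Lemma kap_rho_far : d u q1 - delta < d kap rho.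
Proof.
  pose proof (d_tri d hmet u rho q1). pose proof (d_tri d hmet rho kap q1).
  rewrite (d_sym d hmet rho kap) in H0. rewrite (d_sym d hmet kap q1) in H0. lra.
Qed.

Lemma separated_at_kap_rho c w K c' w' K' : blocks c w (Z.of_nat K) = kap -> blocks c' w' (Z.of_nat K') = rho ->
  d u q1 / 2 < d (Nat.iter (L * K) g (code_point c w)) (Nat.iter (L * K') g (code_point c' w')).
Proof.
  intros E1 E2. pose proof (code_point_traces c w K) as T1. pose proof (code_point_traces c' w' K') as T2.
  rewrite E1 in T1. rewrite E2 in T2. pose proof kap_rho_far.
  pose proof (d_tri d hmet kap (Nat.iter (L * K) g (code_point c w)) rho).
  pose proof (d_tri d hmet (Nat.iter (L * K) g (code_point c w)) (Nat.iter (L * K') g (code_point c' w')) rho).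
  rewrite (d_sym d hmet kap (Nat.iter (L * K) g (code_point c w))) in H0. lra.
Qed.

Lemma blocks_agree c w w' k : (forall j, (slot j <= Z.to_nat k)%nat -> code_bit c w j = code_bit c w' j) -> blocks c w k = blocks c w' k.
Proof.
  intros H. unfold blocks, code_blocks.
  destruct (k <? _)%Z; [reflexivity|]. destruct (k <? _)%Z; [reflexivity|].
  destruct (k <? _)%Z; [reflexivity|]. destruct (k <? _)%Z; [reflexivity|].
  simpl.
  destruct ((prefix_end A C2 c <=? slot (slot_index (Z.to_nat k)))%nat && (slot (slot_index (Z.to_nat k)) <=? Z.to_nat k)%nat &&
     (Z.to_nat k <? slot (slot_index (Z.to_nat k)) + 4)%nat) eqn:E; [|reflexivity].
  apply andb_true_iff in E as [E _]. apply andb_true_iff in E as [_ E]. apply Nat.leb_le in E.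
  rewrite H by exact E. reflexivity.
Qed.

(* w |-> code_point c w is continuous: words agreeing on a long prefix give
   pseudo-orbits agreeing on [-M, M]. *)
Lemma code_point_continuous c w : forall eps, eps > 0 -> exists n, forall w', agree_upto n w w' -> d (code_point c w) (code_point c w') < eps.
Proof.
  intros eps heps. destruct (uniform_expansivity d hmet hcpt g hcont beta hce (eps / 2) ltac:(lra)) as [M HM].
  exists (S M). intros w' Hag.
  assert (H : d (code_point c w) (code_point c w') <= eps / 2).
  { apply (shadow_point_close d hmet hcpt g hcont y0 beta e delta hce he2 Hsh _ _ M (eps / 2)
      (code_orbit_pseudo c w) (code_orbit_pseudo c w') HM).
    intros t ht. unfold code_orbit, unfold_blocks. f_equal. apply blocks_agree. intros j hj.
    assert (Z.to_nat (t / Z.of_nat L) <= M)%nat.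
    { assert (t / Z.of_nat L <= Z.of_nat M)%Z.
      { apply Z.div_le_upper_bound; [lia|]. nia. }
      lia. }
    pose proof (slot_ge j). pose proof (cantor_fst_le j).
    unfold code_bit. destruct (Nat.even (fst (Cantor.of_nat j))); [|reflexivity].
    apply Hag. pose proof (Nat.div2_decr (fst (Cantor.of_nat j)) (fst (Cantor.of_nat j)) ltac:(lia)). lia. }
  lra.
Qed.

Lemma code_point_near_center c w M eta : uniformly_expansive d g beta M eta -> (M < A c * L)%nat ->
  d (code_point c w) (Nat.iter (A c * L) g (a0 c)) <= eta.
Proof.
  intros HM hM.
  replace (Nat.iter (A c * L) g (a0 c)) with (Nat.iter M g (Nat.iter (A c * L - M) g (a0 c))).
  2:{ rewrite <- Nat.iter_add. f_equal. lia. }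
  apply (shadow_point_orbit d hmet hcpt g hcont y0 beta e delta hce he he2 Hsh _ _ M eta (code_orbit_pseudo c w) HM).
  intros t ht. unfold code_orbit, unfold_blocks.
  pose proof (Z.div_mod t (Z.of_nat L) ltac:(lia)) as E.
  pose proof (Z.mod_pos_bound t (Z.of_nat L) ltac:(lia)) as Hb.
  set (q := (t / Z.of_nat L)%Z) in *. set (r := (t mod Z.of_nat L)%Z) in *.
  pose proof (hA c).
  assert (hq1 : (- Z.of_nat (A c) <= q)%Z) by nia.
  assert (hq2 : (q < Z.of_nat (A c))%Z) by nia.
  unfold blocks, code_blocks.
  destruct (Z.ltb_spec q (- Z.of_nat (A c + C1 c))); [lia|].
  destruct (Z.ltb_spec q (- Z.of_nat (A c))); [lia|].
  destruct (Z.ltb_spec q (Z.of_nat (A c))); [|lia].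
  rewrite <- !Nat.iter_add. f_equal.
  assert (Z.of_nat (Z.to_nat (q + Z.of_nat (A c)) * L) = (q + Z.of_nat (A c)) * Z.of_nat L)%Z.
  { rewrite Nat2Z.inj_mul. rewrite Z2Nat.id by lia. reflexivity. }
  lia.
Qed.

Definition member c a w := Nat.iter (8 * L * a) g (code_point c w).

Lemma iter_member n c a w : Nat.iter n g (member c a w) = Nat.iter (n + 8 * L * a) g (code_point c w).
Proof. unfold member. rewrite Nat.iter_add. reflexivity. Qed.

Lemma member_separated c a w c' a' w' K K' : blocks c w (Z.of_nat K) = kap -> blocks c' w' (Z.of_nat K') = rho ->
  (8 * a <= K)%nat -> (K + 8 * a' = K' + 8 * a)%nat ->
  d u q1 / 2 < d (Nat.iter (L * (K - 8 * a)) g (member c a w)) (Nat.iter (L * (K - 8 * a)) g (member c' a' w')).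
Proof.
  intros E1 E2 h1 h2. rewrite !iter_member.
  replace (L * (K - 8 * a) + 8 * L * a)%nat with (L * K)%nat by nia.
  replace (L * (K - 8 * a) + 8 * L * a')%nat with (L * K')%nat by nia.
  apply separated_at_kap_rho; assumption.
Qed.

Lemma blocks_last_slot c w j : (prefix_end A C2 c <= slot j)%nat ->
  blocks c w (Z.of_nat (slot j + 3)) = if code_bit c w j then kap else rho.
Proof.
  intros h. unfold blocks. rewrite (code_blocks_slot g L hL rho gam kap A C1 C2 zin a0 zout c w j) by (auto; lia).
  replace (slot j + 3 - slot j)%nat with 3%nat by lia. reflexivity.
Qed.

(* Distinct members are separated at arbitrarily late times: with the same
   shift, at the last position of late slots where the codes differ ... *)
Lemma scattered_same_shift c a w c' w' : (c <> c' \/ w <> w') -> forall N, exists n, (n >= N)%nat /\ d u q1 / 2 < d (Nat.iter n g (member c a w)) (Nat.iter n g (member c' a w')).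
Proof.
  intros H N. destruct (codes_differ c w c' w' H (N + 8 * a + prefix_end A C2 c + prefix_end A C2 c')) as [j [hj hb]].
  pose proof (slot_ge j).
  exists (L * (slot j + 3 - 8 * a))%nat. split; [nia|].
  pose proof (blocks_last_slot c w j ltac:(lia)) as E1. pose proof (blocks_last_slot c' w' j ltac:(lia)) as E2.
  destruct (code_bit c w j); destruct (code_bit c' w' j); try congruence.
  - apply (member_separated c a w c' a w' (slot j + 3) (slot j + 3)); auto; lia.
  - rewrite (d_sym d hmet (Nat.iter _ g (member c a w))). apply (member_separated c' a w' c a w (slot j + 3) (slot j + 3)); auto; lia.
Qed.

(* ... and with different shifts, where one member reads slot position 1
   (kap) while the other lies between slots (rho). *)
Lemma scattered_other_shift c a w c' a' w' : a <> a' -> forall N, exists n, (n >= N)%nat /\ d u q1 / 2 < d (Nat.iter n g (member c a w)) (Nat.iter n g (member c' a' w')).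
Proof.
  intros H N. set (j := (N + 8 * a + 8 * a' + prefix_end A C2 c + prefix_end A C2 c' + 1)%nat).
  pose proof (slot_ge j).
  exists (L * (slot j + 1 - 8 * a))%nat. split; [nia|].
  apply (member_separated c a w c' a' w' (slot j + 1) (slot j + 1 + 8 * a' - 8 * a)); [| |lia|lia].
  - unfold blocks. rewrite (code_blocks_slot g L hL rho gam kap A C1 C2 zin a0 zout c w j) by (unfold j in *; lia).
    replace (slot j + 1 - slot j)%nat with 1%nat by lia. reflexivity.
  - unfold blocks. apply (code_blocks_rho g L hL rho gam kap A C1 C2 zin a0 zout c' w'); [unfold j in *; lia|].
    intros j'' _ hin. destruct (Nat.lt_trichotomy j'' j) as [h|[h|h]].
    + pose proof (slot_gap_below j j'' h). unfold j in *. lia.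
    + subst j''. lia.
    + pose proof (slot_gap_above j j'' h). unfold j in *. lia.
Qed.

Lemma code_orbit_shifted c w a s : code_orbit c w (Z.of_nat (s + 8 * L * a)) = Nat.iter (s mod L) g (blocks c w (Z.of_nat (s / L + 8 * a))).
Proof.
  unfold code_orbit. rewrite <- (unfold_blocks_at g L hL (blocks c w)) by (apply Nat.mod_upper_bound; lia).
  f_equal. pose proof (Nat.div_mod s L ltac:(lia)). rewrite Nat2Z.inj_add, Nat2Z.inj_mul. nia.
Qed.

Lemma member_follows_rho c a w s : blocks c w (Z.of_nat (s / L + 8 * a)) = rho ->
  d (Nat.iter s g (member c a w)) (Nat.iter (s mod L) g rho) <= e.
Proof.
  intros Hrho. rewrite iter_member.
  pose proof (shadow_point_traces d hmet hcpt g hcont y0 beta e delta hce he2 Hsh (code_orbit c w)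
    (code_orbit_pseudo c w) (s + 8 * L * a)) as T.
  fold (code_point c w) in T. rewrite code_orbit_shifted, Hrho in T.
  replace ((s + 8 * L * a) mod L)%nat with (s mod L) in T; [exact T|].
  replace (s + 8 * L * a)%nat with (s + (8 * a) * L)%nat by lia. rewrite Nat.Div0.mod_add. reflexivity.
Qed.

(* Syndetic proximality: at a time far from all slots of both codes, both
   members follow rho for 2M steps, hence are eta-close by uniform
   expansivity; such times occur in every window of a fixed length. *)
Lemma proximal_syndetic c a w c' a' w' eta : eta > 0 ->
  syndetic (fun n => d (Nat.iter n g (member c a w)) (Nat.iter n g (member c' a' w')) < eta).
Proof.
  intros heta. destruct (uniform_expansivity d hmet hcpt g hcont beta hce eta heta) as [M HM].
  set (R := (M + L * (8 * a + 8 * a' + 8))%nat).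
  set (J0 := (4 * R + 4)%nat).
  set (T0 := (L * slot J0 + R + 1 + M + L * (prefix_end A C2 c + prefix_end A C2 c' + 1))%nat).
  intros Aset HA. destruct (HA (T0 + 2 * R + 2)%nat) as [m Hm].
  destruct (free_time_in_window (fun j => L * slot j)%nat R T0 J0) with (m := m) as [t [ht1 [ht2 ht3]]].
  - intros j j' h. pose proof (slot_gap j j' h). nia.
  - intros j hj. pose proof (slot_gap_above j (S j) ltac:(lia)). unfold J0 in hj. nia.
  - unfold T0. lia.
  - exists t. split; [|replace t with (m + (t - m))%nat by lia; apply Hm; lia].
    replace t with (M + (t - M))%nat by (unfold T0 in ht2; lia).
    rewrite !Nat.iter_add. apply HM. intros i hi. rewrite <- !Nat.iter_add.
    set (s := (i + (t - M))%nat).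
    assert (HK : forall cc ww aa, (aa = a \/ aa = a') -> (cc = c \/ cc = c') ->
       blocks cc ww (Z.of_nat (s / L + 8 * aa)) = rho).
    { intros cc ww aa haa hcc.
      pose proof (Nat.div_mod s L ltac:(lia)) as Es. pose proof (Nat.mod_upper_bound s L ltac:(lia)) as Em.
      set (K := (s / L)%nat) in *. set (r := (s mod L)%nat) in *.
      unfold blocks. apply (code_blocks_rho g L hL rho gam kap A C1 C2 zin a0 zout cc ww).
      - assert (L * (prefix_end A C2 c + prefix_end A C2 c' + 1) <= s)%nat by (unfold T0, s in *; lia).
        destruct hcc; subst cc; nia.
      - intros j _ hin. specialize (ht3 j).
        assert (L * slot j <= L * K + 8 * L * aa /\ L * K + 8 * L * aa < L * slot j + 4 * L)%nat by nia.
        unfold s, R in *. destruct haa; subst aa; nia. }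
    pose proof (member_follows_rho c a w s (HK c w a (or_introl eq_refl) (or_introl eq_refl))) as T1.
    pose proof (member_follows_rho c' a' w' s (HK c' w' a' (or_intror eq_refl) (or_intror eq_refl))) as T2.
    pose proof (d_tri d hmet (Nat.iter s g (member c a w)) (Nat.iter (s mod L) g rho) (Nat.iter s g (member c' a' w'))).
    rewrite (d_sym d hmet (Nat.iter (s mod L) g rho)) in H. lra.
Qed.

Context (eta : nat -> R) (Mf : nat -> nat) (hLU : forall c, uniformly_expansive d g beta (Mf c) (eta c))
  (hMA : forall c, (Mf c < A c * L)%nat)
  (hden : forall x r, r > 0 -> exists c, d x (Nat.iter (A c * L) g (a0 c)) + eta c < r).

Lemma bit_separates c a w w' i : w i <> w' i ->
  let j := Cantor.to_nat ((2 * i)%nat, (8 * a + prefix_end A C2 c + 1)%nat) in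
  d u q1 / 2 < d (Nat.iter (L * (slot j + 3 - 8 * a)) g (member c a w)) (Nat.iter (L * (slot j + 3 - 8 * a)) g (member c a w')).
Proof.
  intros hi j.
  assert (hj : (j >= 8 * a + prefix_end A C2 c + 1)%nat).
  { pose proof (Cantor.to_nat_non_decreasing (2 * i)%nat (8 * a + prefix_end A C2 c + 1)%nat). unfold j. lia. }
  pose proof (slot_ge j).
  assert (hb : forall ww, code_bit c ww j = ww i).
  { intros ww. unfold code_bit, j. rewrite Cantor.cancel_of_to. cbn [fst]. rewrite Nat.even_mul, Nat.div2_double. reflexivity. }
  pose proof (blocks_last_slot c w j ltac:(lia)) as E1.
  pose proof (blocks_last_slot c w' j ltac:(lia)) as E2.
  rewrite hb in E1, E2.
  destruct (w i); destruct (w' i); try congruence.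
  - apply (member_separated c a w c a w' (slot j + 3) (slot j + 3)); auto; lia.
  - rewrite (d_sym d hmet (Nat.iter _ g (member c a w))).
    apply (member_separated c a w' c a w (slot j + 3) (slot j + 3)); auto; lia.
Qed.

(* For fixed (c, a), w |-> member c a w is a homeomorphism of 2^N onto its
   image: continuous, and its inverse is continuous by bit_separates. *)
Lemma member_cantor c a : cantor_set d (fun y => exists w, y = member c a w).
Proof.
  exists (member c a). split; [intros w; exists w; reflexivity|].
  split; [intros y [w hw]; exists w; symmetry; exact hw|].
  assert (Hinv : forall w n, exists dl, dl > 0 /\ forall w', d (member c a w) (member c a w') < dl -> agree_upto n w w').
  { intros w n.
    destruct (finite_min_radius (fun i dl => forall w', d (member c a w) (member c a w') < dl -> w i = w' i)) with (n := n)
      as [dl [hdl Hdl]].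
    - intros i dl dl' h1 h2 w' h3. apply h2. lra.
    - intros i. set (j := Cantor.to_nat ((2 * i)%nat, (8 * a + prefix_end A C2 c + 1)%nat)).
      destruct (iter_continuous d g hcont (L * (slot j + 3 - 8 * a)) (member c a w) (d u q1 / 2)) as [dl [hdl Hdl]].
      { pose proof (d_nonneg d hmet u q1). lra. }
      exists dl. split; [exact hdl|]. intros w' hw'.
      destruct (Bool.bool_dec (w i) (w' i)) as [E|E]; [exact E|].
      pose proof (bit_separates c a w w' i E). cbv zeta in H. fold j in H. specialize (Hdl _ hw'). lra.
    - exists dl. split; [exact hdl|]. intros w' hw' i hi. apply (Hdl i hi w' hw'). }
  split.
  - intros w w' E. apply functional_extensionality. intros i.
    destruct (Hinv w (S i)) as [dl [hdl Hdl]]. apply Hdl; [|lia]. rewrite E, (d_refl d hmet). exact hdl.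
  - split; [|exact Hinv].
    intros w eps heps. unfold member.
    destruct (iter_continuous d g hcont (8 * L * a) (code_point c w) eps heps) as [dl [hdl Hdl]].
    destruct (code_point_continuous c w dl hdl) as [n Hn]. exists n. intros w' hw'. apply Hdl. apply Hn. exact hw'.
Qed.

Definition members (y : Y) : Prop := exists c a w, y = member c a w.

Lemma members_scattered c a w c' a' w' : member c a w <> member c' a' w' -> forall N, exists n, (n >= N)%nat /\
  d u q1 / 2 < d (Nat.iter n g (member c a w)) (Nat.iter n g (member c' a' w')).
Proof.
  intros hne N. destruct (Nat.eq_dec a a') as [<-|ha].
  - apply scattered_same_shift. destruct (Nat.eq_dec c c') as [<-|hc]; [|left; exact hc].
    right. intros <-. apply hne. reflexivity.
  - apply scattered_other_shift. exact ha.
Qed.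

Lemma members_dense : dense d members.
Proof.
  intros x r hr. destruct (hden x r hr) as [c hc]. exists (member c 0 (fun _ => false)). split.
  - assert (E : member c 0 (fun _ => false) = code_point c (fun _ => false)).
    { unfold member. rewrite Nat.mul_0_r. reflexivity. }
    rewrite E. pose proof (code_point_near_center c (fun _ => false) (Mf c) (eta c) (hLU c) (hMA c)).
    pose proof (d_tri d hmet x (Nat.iter (A c * L) g (a0 c)) (code_point c (fun _ => false))).
    rewrite (d_sym d hmet (Nat.iter (A c * L) g (a0 c))) in H0. lra.
  - exists c, 0%nat, (fun _ => false). reflexivity.
Qed.

Lemma members_mycielski : mycielski d members.
Proof.
  exists (fun m => fun y => exists w, y = member (fst (Cantor.of_nat m)) (snd (Cantor.of_nat m)) w).
  split; [intros m; apply member_cantor|].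
  intros y. split.
  - intros [c [a [w hw]]]. exists (Cantor.to_nat (c, a)). rewrite Cantor.cancel_of_to. exists w. exact hw.
  - intros [m [w hw]]. exists (fst (Cantor.of_nat m)), (snd (Cantor.of_nat m)), w. exact hw.
Qed.

Lemma members_invariant x : members x -> members (Nat.iter (8 * L) g x).
Proof. intros [c [a [w ->]]]. exists c, (S a), w. unfold member. rewrite <- Nat.iter_add. f_equal. lia. Qed.

Lemma members_scrambled : syndetically_scrambled d g (d u q1 / 2) members.
Proof.
  split.
  - exists (member 0 0 (fun _ => false)), (member 0 0 (fun _ => true)).
    split; [exists 0%nat, 0%nat, (fun _ => false); reflexivity|].
    split; [exists 0%nat, 0%nat, (fun _ => true); reflexivity|].
    intros E. pose proof (bit_separates 0 0 (fun _ => false) (fun _ => true) 0 ltac:(discriminate)) as H.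
    cbv zeta in H. rewrite E, (d_refl d hmet) in H. lra.
  - intros x y [c [a [w ->]]] [c' [a' [w' ->]]] hne. split; [|split].
    + intros eta0 heta0. apply proximal_syndetic. exact heta0.
    + intros Hcv. destruct (Hcv (d u q1 / 2) ltac:(lra)) as [N HN].
      destruct (members_scattered c a w c' a' w' hne N) as [n [hn Hn]]. specialize (HN n hn).
      unfold R_dist in HN. rewrite Rminus_0_r, Rabs_pos_eq in HN by apply (d_nonneg d hmet). lra.
    + intros dl hdl N. destruct (members_scattered c a w c' a' w' hne N) as [n [hn Hn]].
      exists n. split; [exact hn|]. lra.
Qed.

Theorem scrambled_mycielski_of_coding : exists (eps : R) (k : nat) (T : Y -> Prop),
    eps > 0 /\ (k >= 1)%nat /\
    dense d T /\ mycielski d T /\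
    (forall x, T x -> T (Nat.iter k g x)) /\
    syndetically_scrambled d g eps T.
Proof.
  exists (d u q1 / 2), (8 * L)%nat, members.
  split; [lra|]. split; [lia|].
  split; [exact members_dense|]. split; [exact members_mycielski|].
  split; [exact members_invariant|exact members_scrambled].
Qed.

End Main.

Lemma mixing_connects {Y : Type} (d : Y -> Y -> R) (hmet : is_metric d) (g : Y -> Y) (hmix : mixing d g)
  (r : R) (hr : r > 0) (a b : Y) :
  exists N, forall n, (n >= N)%nat -> exists z, d a z < r /\ d b (Nat.iter n g z) < r.
Proof.
  apply (hmix (fun z => d a z < r) (fun z => d b z < r)); try (apply ball_open; exact hmet).
  - exists a. rewrite (d_refl d hmet). lra.
  - exists b. rewrite (d_refl d hmet). lra.
Qed.

Lemma mixing_connects_multiple {Y : Type} (d : Y -> Y -> R) (hmet : is_metric d) (g : Y -> Y)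
  (hmix : mixing d g) (r : R) (hr : r > 0) (L : nat) (hL : (1 <= L)%nat) (a b : Y) :
  exists (C : nat) (z : Y), (1 <= C)%nat /\ d a z < r /\ d b (Nat.iter (C * L) g z) < r.
Proof.
  destruct (mixing_connects d hmet g hmix r hr a b) as [N HN].
  destruct (HN (S N * L)%nat ltac:(nia)) as [z [h1 h2]].
  exists (S N), z. split; [lia|]. split; assumption.
Qed.

Lemma compact_separable {Y : Type} (d : Y -> Y -> R) (hmet : is_metric d) (hcpt : is_compact_space d) (y0 : Y) :
  exists cen : nat -> Y, forall x r, r > 0 -> exists c, d x (cen c) < r.
Proof.
  assert (Hcov : forall n : nat, exists l : list Y, forall y, exists i, In i l /\ d i y < / INR (S n)).
  { intros n. apply (hcpt Y (fun i z => d i z < / INR (S n))).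
    - intros i. apply ball_open; exact hmet.
    - intros y. exists y. rewrite (d_refl d hmet). apply Rinv_0_lt_compat. apply lt_0_INR. lia. }
  destruct (choice _ Hcov) as [lst Hlst].
  exists (fun c => nth (snd (Cantor.of_nat c)) (lst (fst (Cantor.of_nat c))) y0).
  intros x r hr. destruct (inv_succ_small r hr) as [n hn].
  destruct (Hlst n x) as [i [hi hdi]]. destruct (In_nth (lst n) i y0 hi) as [k [_ hk]].
  exists (Cantor.to_nat (n, k)). rewrite Cantor.cancel_of_to. cbn [fst snd].
  rewrite hk, (d_sym d hmet). lra.
Qed.

Lemma iter_surjective {Y : Type} (g : Y -> Y) (hsurj : surjective_map g) :
  forall n y, exists x, Nat.iter n g x = y.
Proof.
  induction n; intros y; [exists y; reflexivity|].
  destruct (hsurj y) as [y' hy']. destruct (IHn y') as [x hx].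
  exists x. rewrite Nat.iter_succ, hx. exact hy'.
Qed.

(* The density data of the coding: centers a0 c, with c enumerating pairs
   (point of a countable dense set, precision 1/(n+1)), placed in the middle
   of a prefix longer than the uniform expansivity time for that precision,
   and connected to and from u by mixing. *)
Lemma dense_coding_data {Y : Type} (d : Y -> Y -> R) (hmet : is_metric d) (hcpt : is_compact_space d)
  (g : Y -> Y) (hcont : continuous_map d g) (hsurj : surjective_map g) (hmix : mixing d g)
  (beta : R) (hce : c_expansive d g beta) (u : Y) (delta : R) (hdelta : delta > 0)
  (L : nat) (hL : (1 <= L)%nat) :
  exists (A C1 C2 : nat -> nat) (zin a0 zout : nat -> Y) (eta : nat -> R) (Mf : nat -> nat),
    (forall c, (1 <= A c)%nat) /\ (forall c, (1 <= C1 c)%nat) /\ (forall c, (1 <= C2 c)%nat) /\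
    (forall c, d u (zin c) < delta / 2) /\
    (forall c, d (a0 c) (Nat.iter (C1 c * L) g (zin c)) < delta / 2) /\
    (forall c, d (Nat.iter (2 * A c * L) g (a0 c)) (zout c) < delta / 2) /\
    (forall c, d u (Nat.iter (C2 c * L) g (zout c)) < delta / 2) /\
    (forall c, uniformly_expansive d g beta (Mf c) (eta c)) /\
    (forall c, (Mf c < A c * L)%nat) /\
    (forall x r, r > 0 -> exists c, d x (Nat.iter (A c * L) g (a0 c)) + eta c < r).
Proof.
  destruct (compact_separable d hmet hcpt u) as [cen Hcen].
  set (eta := fun c => / INR (S (snd (Cantor.of_nat c)))).
  assert (HM : forall c, exists M, uniformly_expansive d g beta M (eta c)).
  { intros c. apply (uniform_expansivity d hmet hcpt g hcont beta hce).
    unfold eta. apply Rinv_0_lt_compat. apply lt_0_INR. lia. }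
  destruct (choice _ HM) as [Mf hLU].
  set (A := fun c => S (Mf c)).
  destruct (choice _ (fun c => iter_surjective g hsurj (A c * L)%nat (cen (fst (Cantor.of_nat c)))))
    as [a0 Ha0].
  assert (Hin : forall c, exists p : nat * Y, (1 <= fst p)%nat /\ d u (snd p) < delta / 2 /\
     d (a0 c) (Nat.iter (fst p * L) g (snd p)) < delta / 2).
  { intros c. destruct (mixing_connects_multiple d hmet g hmix (delta / 2) ltac:(lra) L hL u (a0 c))
      as [C [z H]]. exists (C, z). exact H. }
  assert (Hout : forall c, exists p : nat * Y, (1 <= fst p)%nat /\
     d (Nat.iter (2 * A c * L) g (a0 c)) (snd p) < delta / 2 /\ d u (Nat.iter (fst p * L) g (snd p)) < delta / 2).
  { intros c. destruct (mixing_connects_multiple d hmet g hmix (delta / 2) ltac:(lra) L hL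
      (Nat.iter (2 * A c * L) g (a0 c)) u) as [C [z H]]. exists (C, z). exact H. }
  destruct (choice _ Hin) as [pin Hpin]. destruct (choice _ Hout) as [pout Hpout].
  exists A, (fun c => fst (pin c)), (fun c => fst (pout c)), (fun c => snd (pin c)), a0,
    (fun c => snd (pout c)), eta, Mf.
  split; [intros c; unfold A; lia|].
  split; [intros c; apply (Hpin c)|]. split; [intros c; apply (Hpout c)|].
  split; [intros c; apply (Hpin c)|]. split; [intros c; apply (Hpin c)|].
  split; [intros c; apply (Hpout c)|]. split; [intros c; apply (Hpout c)|].
  split; [exact hLU|]. split; [intros c; unfold A; nia|].
  intros x r hr. destruct (inv_succ_small (r / 2) ltac:(lra)) as [n hn].
  destruct (Hcen x (r / 2) ltac:(lra)) as [k hk].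
  exists (Cantor.to_nat (k, n)). rewrite Ha0. unfold eta. rewrite Cantor.cancel_of_to. cbn [fst snd]. lra.
Qed.

Lemma shadowing_scale {Y : Type} (d : Y -> Y -> R) (g : Y -> Y) (hsh : has_shadowing d g)
  (beta D : R) (hb : beta > 0) (hD : D > 0) :
  exists e delta : R, e > 0 /\ 2 * e <= beta / 2 /\ 6 * e < D /\ delta > 0 /\ delta <= e /\
    forall x : nat -> Y, (forall i, d (g (x i)) (x (S i)) < delta) ->
      exists z, forall i, d (Nat.iter i g z) (x i) < e.
Proof.
  set (e := Rmin (beta / 4) (D / 7)).
  assert (he : e > 0) by (apply Rmin_pos; lra).
  pose proof (Rmin_l (beta / 4) (D / 7)). pose proof (Rmin_r (beta / 4) (D / 7)).
  destruct (hsh e he) as [dl0 [hdl0 Hsh0]].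
  exists e, (Rmin dl0 e). repeat split; try (unfold e in *; lra).
  - apply Rmin_pos; lra.
  - apply Rmin_r.
  - intros x hx. apply Hsh0. intros i. eapply Rlt_le_trans; [apply hx|apply Rmin_l].
Qed.

Lemma connection_points {Y : Type} (d : Y -> Y -> R) (hmet : is_metric d) (g : Y -> Y) (hmix : mixing d g)
  (r : R) (hr : r > 0) (u q1 : Y) :
  exists (L : nat) (rho gam kap : Y), (1 <= L)%nat /\
    d u rho < r /\ d u (Nat.iter L g rho) < r /\ d u gam < r /\ d q1 (Nat.iter L g gam) < r /\
    d q1 kap < r /\ d u (Nat.iter L g kap) < r.
Proof.
  destruct (mixing_connects d hmet g hmix r hr u u) as [N1 HN1].
  destruct (mixing_connects d hmet g hmix r hr u q1) as [N2 HN2].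
  destruct (mixing_connects d hmet g hmix r hr q1 u) as [N3 HN3].
  destruct (HN1 (N1 + N2 + N3 + 1)%nat ltac:(lia)) as [rho [hr1 hr2]].
  destruct (HN2 (N1 + N2 + N3 + 1)%nat ltac:(lia)) as [gam [hg1 hg2]].
  destruct (HN3 (N1 + N2 + N3 + 1)%nat ltac:(lia)) as [kap [hk1 hk2]].
  exists (N1 + N2 + N3 + 1)%nat, rho, gam, kap. repeat split; (lia || assumption).
Qed.

Theorem corollary4p15 (Y : Type) (d : Y -> Y -> R) (g : Y -> Y)
  (hmet : is_metric d) (hcpt : is_compact_space d)
  (hnontriv : exists a b : Y, a <> b)
  (hTA : TA_map d g) (hmix : mixing d g) :
  exists (eps : R) (k : nat) (T : Y -> Prop),
    eps > 0 /\ (k >= 1)%nat /\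
    dense d T /\ mycielski d T /\
    (forall x, T x -> T (Nat.iter k g x)) /\
    syndetically_scrambled d g eps T.
Proof.
  destruct hnontriv as [q0 [q1 hq]].
  destruct hTA as [hcont [hsurj [[beta hce] hsh]]].
  assert (hD : d q0 q1 > 0).
  { destruct (Rle_lt_or_eq_dec 0 (d q0 q1) (d_nonneg d hmet q0 q1)) as [h|h]; [exact h|].
    exfalso. apply hq. apply (d_eq d hmet). auto. }
  destruct (shadowing_scale d g hsh beta (d q0 q1) (proj1 hce) hD)
    as (e & dl & he & he2 & hsep & hdl & hde & Hsh).
  destruct (connection_points d hmet g hmix (dl / 2) ltac:(lra) q0 q1)
    as (L & rho & gam & kap & hL & hr1 & hr2 & hg1 & hg2 & hk1 & hk2).
  destruct (dense_coding_data d hmet hcpt g hcont hsurj hmix beta hce q0 dl hdl L hL)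
    as (A & C1 & C2 & zin & a0 & zout & eta & Mf & hA & hC1 & hC2 & hzi1 & hzi2 & hzo1 & hzo2 & hLU & hMA & hden).
  exact (scrambled_mycielski_of_coding d hmet hcpt g hcont q0 beta e dl hce he he2 Hsh hdl hde
    L hL q0 q1 rho gam kap hsep hr1 hr2 hg1 hg2 hk1 hk2
    A C1 C2 zin a0 zout hA hC1 hC2 hzi1 hzi2 hzo1 hzo2 eta Mf hLU hMA hden).
Qed.
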